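(* Let $\|\cdot\|$ be a norm on $\mathbb{R}^K$. For every $\mathbf{w} = (\mathbf{w}_1,\mathbf{w}_2) \in \mathbb{R}^K\times\mathbb{R}^K$, \[ \min_{\boldsymbol{\alpha}\in\Delta(K)}\max_{\mathbf{l}\in[0,1]^K} \langle \mathbf{w}, (\boldsymbol{\alpha}\odot\mathbf{l},\mathbf{l})\rangle \le h_S(\mathbf{w}). \] That is, the Blackwell condition holds for the game with payoff $r(\boldsymbol{\alpha},\mathbf{l}) = (\boldsymbol{\alpha}\odot\mathbf{l},\mathbf{l})$ and target set $S$.
   Context: $\Delta(K) = \{\boldsymbol{\alpha}\in[0,1]^K : \sum_i\alpha_i = 1\}$; $\boldsymbol{\alpha}\odot\mathbf{l} = (\alpha_1 l_1,\dots,\alpha_K l_K)$; $C^*(\mathbf{l}) = \min_{\boldsymbol{\alpha}\in\Delta(K)}\|\boldsymbol{\alpha}\odot\mathbf{l}\|$; $S = \{(\mathbf{x},\mathbf{y})\in[0,1]^K\times[0,1]^K : \|\mathbf{x}\|\le C^*(\mathbf{y})\}$; $h_S(\mathbf{w}) = \sup_{\mathbf{s}\in S}\langle\mathbf{s},\mathbf{w}\rangle$ with inner product $\langle(\mathbf{a},\mathbf{b}),(\mathbf{c},\mathbf{d})\rangle = \langle\mathbf{a},\mathbf{c}\rangle+\langle\mathbf{b},\mathbf{d}\rangle$ on $\mathbb{R}^K\times\mathbb{R}^K$. *)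

From HB Require Import structures.
From mathcomp Require Import all_boot all_order all_algebra.
From mathcomp Require Import boolp classical_sets reals.
Set Implicit Arguments. Unset Strict Implicit. Unset Printing Implicit Defensive.
Import Order.TTheory GRing.Theory Num.Theory.
Local Open Scope classical_set_scope.
Local Open Scope ring_scope.

Section Defs.
Variables (R : realType) (K : nat).

Definition vecK := 'I_K -> R.

Definition is_norm (N : vecK -> R) : Prop :=
  [/\ forall x : vecK, N x = 0 -> x = (fun _ => 0),
      forall (a : R) (x : vecK), N (fun i => a * x i) = `|a| * N x
    & forall x y : vecK, N (fun i => x i + y i) <= N x + N y].

Definition inprod (a c : vecK) : R := \sum_(i < K) a i * c i.

Definition inprod2 (u v : vecK * vecK) : R := inprod u.1 v.1 + inprod u.2 v.2.

Definition cube : set vecK := [set l | forall i, 0 <= l i <= 1].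

Definition simplex : set vecK :=
  [set a | (forall i, 0 <= a i <= 1) /\ \sum_(i < K) a i = 1].

Definition hadamard (a l : vecK) : vecK := fun i => a i * l i.

(* C*(l) = min_{alpha in Delta(K)} ||alpha (.) l|| (attained; written as inf) *)
Definition Cstar (N : vecK -> R) (l : vecK) : R :=
  inf [set N (hadamard a l) | a in simplex].

Definition Sset (N : vecK -> R) : set (vecK * vecK) :=
  [set s | cube s.1 /\ cube s.2 /\ N s.1 <= Cstar N s.2].

Definition hS (N : vecK -> R) (w : vecK * vecK) : R :=
  sup [set inprod2 s w | s in Sset N].

Definition payoff (a l : vecK) : vecK * vecK := (hadamard a l, l).

End Defs.

(* Write w = (a, b).  The payoff <w, r(alpha, l)> = sum_i (alpha_i a_i + b_i) l_i
   is linear in l, so it suffices to exhibit one mixed action alpha and one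
   point s of S with <w, r(alpha, l)> <= <s, w> for every l in the cube (alpha
   is then called forcing): min-max <= sup_l <w, r(alpha, l)> <= <s, w> <= h_S(w).
   - If some a_j <= 0, alpha = e_j has every coefficient at most b_i^+, and
     s = (0, 1_{b >= 0}) lies in S with <s, w> = sum_i b_i^+.
   - If a > 0, v_i = (b_i^+ - b_i) / a_i is the least weight raising the i-th
     coefficient to b_i^+.  When sum v >= 1, alpha = v / sum v works as above.
   - Otherwise alpha puts the missing mass on an index j minimising a, and
     s = (bb (.) y, y) with y_i = 1 if b_i >= 0, y_i = a_j / a_i otherwise, and
     bb a minimiser in the definition of C*(y), which exists by compactness. *)

From HB Require Import structures.
From mathcomp Require Import all_boot all_order all_algebra.
From mathcomp Require Import boolp classical_sets reals topology normedtype derive.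
From mathcomp Require Import lra ring.
Import Order.TTheory GRing.Theory Num.Theory.
Import numFieldNormedType.Exports.
Local Open Scope classical_set_scope.
Local Open Scope ring_scope.

Section RowVectors.
Context {R : realType}.

Lemma lipschitz_continuous (V : normedModType R) (g : V -> R) (M : R) :
  0 < M -> (forall u v, `|g u - g v| <= M * `|u - v|) -> continuous g.
Proof.
move=> M_gt0 g_lip x.
apply/(@cvgrPdist_lt _ _ _ (nbhs x)) => e e_gt0; near=> y.
apply: le_lt_trans (g_lip _ _) _; rewrite -ltr_pdivlMl // mulrC.
near: y; apply: (@cvgr_dist_lt _ _ _ (nbhs x) _ id x cvg_id).
by rewrite divr_gt0.
Unshelve. all: by end_near.
Qed.

Definition simplex_rV n : set 'rV[R]_n :=
  [set v | (forall i, 0 <= v ord0 i <= 1) /\ \sum_i v ord0 i = 1].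

(* It is a closed subset of the compact cube [0,1]^n, hence compact. *)
Lemma simplex_rV_compact n : compact (simplex_rV n).
Proof.
pose box := [set v : 'rV[R]_n | forall i, v ord0 i \in `[0, 1]].
have box_compact : compact box.
  exact: (@rV_compact R n (fun=> `[0, 1]%classic) (fun=> @segment_compact R 0 1)).
have sum_cont : continuous (fun v : 'rV[R]_n => \sum_i v ord0 i).
  by apply: continuous_big => [|i _]; [exact: add_continuous | exact: coord_continuous].
have -> : simplex_rV n = box `&` ((fun v => \sum_i v ord0 i) @^-1` [set 1]).
  by apply/seteqP; split => v /= [v01 v1]; split.
apply: (subclosed_compact _ box_compact) => [|v []//].
apply: closedI; first exact: compact_closed.
by apply: preimage_closed; [move=> v _; exact: sum_cont | exact: closed_eq].
Qed.

Lemma rV_coord_le_norm {n} (u : 'rV[R]_n) i : `|u ord0 i| <= `|u|.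
Proof.
change `|u| with (mx_norm u); rewrite mx_normrE.
by apply/bigmax_geP; right; exists (ord0, i).
Qed.

End RowVectors.

Section CubeSimplex.
Context {R : realType} {K : nat}.
Implicit Types (a c l x : vecK R K).

Definition unit_vec (j : 'I_K) : vecK R K := fun i => (i == j)%:R.

Lemma sum_unit_vec j : \sum_i unit_vec j i = 1.
Proof.
rewrite (bigD1 j) //= /unit_vec eqxx big1 ?addr0 // => i /negbTE ->; by [].
Qed.

Lemma unit_vec_simplex j : simplex (unit_vec j).
Proof.
split; last exact: sum_unit_vec.
by move=> i; rewrite /unit_vec; case: (i == j); rewrite /= ?lexx ?ler01.
Qed.

Lemma cube_abs_le1 l : cube l -> forall i, `|l i| <= 1.
Proof. by move=> l01 i; have /andP[l0 l1] := l01 i; rewrite ger0_norm. Qed.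

Lemma hadamard_cube a l : cube a -> cube l -> cube (hadamard a l).
Proof.
move=> a01 l01 i; have /andP[a0 a1] := a01 i; have /andP[l0 l1] := l01 i.
by rewrite /hadamard mulr_ge0 ?mulr_ile1.
Qed.

Lemma inprodC c x : inprod c x = inprod x c.
Proof. by apply: eq_bigr => i _; rewrite mulrC. Qed.

Lemma inprod_le_l1 c x : (forall i, `|x i| <= 1) -> inprod c x <= \sum_i `|c i|.
Proof.
move=> x1; apply: ler_sum => i _; apply: le_trans (ler_norm _) _.
by rewrite normrM -[leRHS]mulr1 ler_wpM2l.
Qed.

Lemma sum_cube_le c (d : vecK R K) l : (forall i, c i <= d i) ->
  (forall i, 0 <= d i) -> cube l -> \sum_i c i * l i <= \sum_i d i.
Proof.
move=> cd d0 l01; apply: ler_sum => i _; have /andP[l0 l1] := l01 i.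
have := cd i; have := d0 i; nra.
Qed.

Lemma simplex_avg_ge a x (m : R) : simplex a -> (forall i, m <= x i) ->
  m <= \sum_i a i * x i.
Proof.
move=> [a01 a1] mx; rewrite -[leLHS]mul1r -a1 mulr_suml.
by apply: ler_sum => i _; have /andP[a0 _] := a01 i; rewrite ler_wpM2l.
Qed.

End CubeSimplex.

Section NormFacts.
Context {R : realType} {K : nat} {N : vecK R K -> R}.
Hypothesis hN : is_norm N.
Implicit Types (x y : vecK R K).

Lemma norm0 : N (fun _ => 0) = 0.
Proof.
case: hN => _ normZ _.
have -> : (fun _ : 'I_K => 0 : R) = (fun i => 0 * (fun _ => 0 : R) i).
  by apply: funext => i; rewrite mul0r.
by rewrite normZ normr0 mul0r.
Qed.

Lemma norm_ge0 x : 0 <= N x.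
Proof.
case: hN => _ normZ normD.
have := normD x (fun i => -1 * x i); rewrite normZ normrN normr1 mul1r.
have -> : (fun i => x i + -1 * x i) = (fun _ => 0).
  by apply: funext => i; rewrite mulN1r subrr.
rewrite norm0; lra.
Qed.

Lemma norm_sub_le x y : N x - N y <= N (fun i => x i - y i).
Proof.
case: hN => _ _ normD; have := normD y (fun i => x i - y i).
have -> : (fun i => y i + (x i - y i)) = x by apply: funext => i; rewrite addrC subrK.
lra.
Qed.

Lemma norm_sum_le (s : seq 'I_K) (F : 'I_K -> vecK R K) :
  N (fun i => \sum_(j <- s) F j i) <= \sum_(j <- s) N (F j).
Proof.
case: hN => _ _ normD; elim: s => [|j s IHs].
  under eq_fun do rewrite big_nil.
  by rewrite norm0 big_nil.
under eq_fun do rewrite big_cons.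
by rewrite big_cons; apply: le_trans (normD _ _) _; rewrite lerD2l.
Qed.

(* Expanding x in the standard basis bounds N by a weighted l1-norm. *)
Lemma norm_le_coords x : N x <= \sum_j `|x j| * N (unit_vec j).
Proof.
case: hN => _ normZ _.
have xE : x = (fun i => \sum_(j <- index_enum 'I_K) (fun i => x j * unit_vec j i) i).
  apply: funext => i /=; rewrite (bigD1 i) //= /unit_vec eqxx mulr1 big1 ?addr0 //.
  by move=> j; rewrite eq_sym => /negbTE ->; rewrite mulr0.
rewrite {1}xE; apply: le_trans (norm_sum_le _ _) _.
by apply: ler_sum => j _; rewrite normZ.
Qed.

Lemma norm_hadamard_lipschitz y (u v : 'rV[R]_K) :
  N (hadamard (u ord0) y) - N (hadamard (v ord0) y)
  <= `|u - v| * \sum_j `|y j| * N (unit_vec j).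
Proof.
apply: le_trans (norm_sub_le _ _) _; apply: le_trans (norm_le_coords _) _.
rewrite mulr_sumr; apply: ler_sum => j _; rewrite mulrA ler_wpM2r ?norm_ge0 //.
rewrite /hadamard -mulrBl normrM ler_wpM2r //.
by have := rV_coord_le_norm (u - v) j; rewrite !mxE.
Qed.

(* By compactness of the simplex, C*(y) is attained: some weights bb in the
   simplex minimise a |-> N (a (.) y).  This needs K > 0 (nonempty simplex). *)
Lemma Cstar_attained : (0 < K)%N -> forall y,
  exists2 bb, simplex bb & N (hadamard bb y) <= Cstar N y.
Proof.
move=> K_gt0 y; pose F (v : 'rV[R]_K) := N (hadamard (v ord0) y).
pose M := \sum_j `|y j| * N (unit_vec j).
have M_ge0 : 0 <= M by apply: sumr_ge0 => j _; rewrite mulr_ge0 ?norm_ge0.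
have F_cont : continuous F.
  apply: (@lipschitz_continuous R _ F (M + 1)); first by rewrite ltr_wpDl.
  move=> u v; have Fuv : F u - F v <= `|u - v| * M := norm_hadamard_lipschitz y u v.
  have Fvu : F v - F u <= `|u - v| * M.
    by rewrite distrC; exact: norm_hadamard_lipschitz.
  have uv_ge0 : 0 <= `|u - v| by [].
  by rewrite ler_norml; apply/andP; split; nra.
have rowK (a : vecK R K) : (\row_i a i) ord0 = a by apply: funext => i; rewrite mxE.
have simplex_row (a : vecK R K) : simplex a -> @simplex_rV R K (\row_i a i).
  by rewrite /simplex_rV /= rowK.
have simplex_ne : @simplex_rV R K !=set0.
  by exists (\row_i unit_vec (Ordinal K_gt0) i); exact/simplex_row/unit_vec_simplex.
have [c /[!inE] c_simplex c_min] :=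
  EVT_min_rV simplex_ne (simplex_rV_compact K) (continuous_subspaceT F_cont).
exists (c ord0) => //; apply: lb_le_inf.
  by exists (F c), (c ord0).
move=> _ [a a_simplex <-]; have := c_min (\row_i a i).
by rewrite /F rowK; apply; rewrite inE; exact: simplex_row.
Qed.

Lemma Cstar_ge0 : (0 < K)%N -> forall y, 0 <= Cstar N y.
Proof.
move=> K_gt0 y; apply: lb_le_inf => [|_ [a _ <-]]; last exact: norm_ge0.
by exists (N (hadamard (unit_vec (Ordinal K_gt0)) y)), (unit_vec (Ordinal K_gt0));
  first exact: unit_vec_simplex.
Qed.

End NormFacts.

Section Blackwell.
Context {R : realType} {K : nat} {N : vecK R K -> R}.
Variable w : vecK R K * vecK R K.
Hypothesis hN : is_norm N.
Let a := w.1.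
Let b := w.2.

Lemma payoffE alpha l :
  inprod2 w (payoff alpha l) = \sum_i (alpha i * a i + b i) * l i.
Proof.
rewrite /inprod2 /inprod /hadamard /= -big_split /=.
by apply: eq_bigr => i _; rewrite /a /b /hadamard; ring.
Qed.

Let bound := \sum_i `|a i| + \sum_i `|b i|.

Lemma payoff_le_bound alpha l : simplex alpha -> cube l ->
  inprod2 w (payoff alpha l) <= bound.
Proof.
move=> [alpha01 _] l01; rewrite /inprod2 /payoff /=.
apply: lerD; apply: inprod_le_l1; apply: cube_abs_le1 => //.
exact: hadamard_cube.
Qed.

Lemma S_le_bound s : Sset N s -> inprod2 s w <= bound.
Proof.
move=> [s1_cube [s2_cube _]]; rewrite /inprod2 !(inprodC s.1) !(inprodC s.2).
by apply: lerD; apply: inprod_le_l1; exact: cube_abs_le1.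
Qed.

Definition forcing alpha : Prop := simplex alpha /\
  exists2 s, Sset N s & forall l, cube l -> inprod2 w (payoff alpha l) <= inprod2 s w.

Lemma minmax_le_hS alpha : forcing alpha ->
  inf [set sup [set inprod2 w (payoff a' l) | l in @cube R K] | a' in @simplex R K]
  <= hS N w.
Proof.
move=> [alpha_simplex [s sS s_forces]].
have cube0 : @cube R K (fun _ => 0) by move=> i; rewrite lexx ler01.
have payoff0 alpha' : inprod2 w (payoff alpha' (fun _ => 0)) = 0.
  by rewrite payoffE big1 // => i _; rewrite mulr0.
apply: (@le_trans _ _ (sup [set inprod2 w (payoff alpha l) | l in @cube R K])).
  apply: ge_inf; last by exists alpha.
  exists 0 => _ [alpha' alpha'_simplex <-]; apply: ub_le_sup.
    by exists bound => _ [l l_cube <-]; exact: payoff_le_bound.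
  by exists (fun _ => 0); rewrite ?payoff0.
apply: ge_sup; first by exists 0, (fun _ => 0); rewrite ?payoff0.
move=> _ [l l_cube <-]; apply: le_trans (s_forces l l_cube) _.
apply: ub_le_sup; last by exists s.
by exists bound => _ [s' s'S <-]; exact: S_le_bound.
Qed.

Hypothesis K_gt0 : (0 < K)%N.

Let ind i : R := if 0 <= b i then 1 else 0.
Let pos i := ind i * b i.

Lemma pos_ge0 i : 0 <= pos i.
Proof. by rewrite /pos /ind; case: ifP; rewrite ?mul1r ?mul0r. Qed.

Lemma le_pos i : b i <= pos i.
Proof.
by rewrite /pos /ind; case: (lerP 0 (b i)) => [_|/ltW]; rewrite ?mul1r ?mul0r.
Qed.

Lemma forcing_of_le_pos alpha : simplex alpha ->
  (forall i, alpha i * a i + b i <= pos i) -> forcing alpha.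
Proof.
move=> alpha_simplex le_coef; split => //; exists ((fun _ => 0), ind).
  split; first by move=> i; rewrite lexx ler01.
  split; last by rewrite /= (norm0 hN); exact: Cstar_ge0.
  by move=> i; rewrite /= /ind; case: ifP; rewrite ?lexx ?ler01.
move=> l l_cube; rewrite {2}/inprod2 /inprod /= [X in _ <= X + _]big1 => [|i _].
  by rewrite add0r payoffE; exact: sum_cube_le _ _ _ le_coef pos_ge0 l_cube.
exact: mul0r.
Qed.

Lemma forcing_nonpos j : a j <= 0 -> forcing (unit_vec j).
Proof.
move=> aj_le0; apply: forcing_of_le_pos => [|i]; first exact: unit_vec_simplex.
rewrite /unit_vec; have [->|_] := eqVneq i j; rewrite /= ?mul1r ?mul0r ?add0r.
  by have := le_pos j; lra.
exact: le_pos.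
Qed.

Section PositiveCase.
Hypothesis a_gt0 : forall i, 0 < a i.

(* The least weight on i bringing its coefficient up to b_i^+, and their sum. *)
Let v i := (pos i - b i) / a i.
Let mass := \sum_i v i.

Lemma v_ge0 i : 0 <= v i.
Proof. by rewrite divr_ge0 ?subr_ge0 ?le_pos // ltW. Qed.

Lemma v_coef i : v i * a i + b i = pos i.
Proof. by rewrite divfK ?subrK // gt_eqF. Qed.

Lemma v_le_mass i : v i <= mass.
Proof. by rewrite /mass (bigD1 i) //= lerDl sumr_ge0 // => k _; exact: v_ge0. Qed.

Lemma forcing_large_mass : 1 <= mass -> forcing (fun i => v i / mass).
Proof.
move=> mass_ge1; have mass_gt0 : 0 < mass by lra.
apply: forcing_of_le_pos => [|i].
  split; last by rewrite -mulr_suml divff // gt_eqF.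
  move=> i; rewrite divr_ge0 ?v_ge0 ?(ltW mass_gt0) //=.
  by rewrite ler_pdivrMr // mul1r v_le_mass.
rewrite -v_coef lerD2r ler_wpM2r ?(ltW (a_gt0 i)) //.
by rewrite ler_pdivrMr // -{1}[v i]mulr1 ler_wpM2l ?v_ge0.
Qed.

Section SmallMass.
Variable j : 'I_K.
Hypothesis j_min : forall i, a j <= a i.
Hypothesis mass_lt1 : mass < 1.

Let alpha i := v i + unit_vec j i * (1 - mass).

Lemma alpha_simplex : simplex alpha.
Proof.
split; last by rewrite big_split /= -mulr_suml sum_unit_vec -/mass; ring.
move=> i; rewrite /alpha /unit_vec.
have := v_ge0 i; have := v_le_mass i.
have mass_le1 := ltW mass_lt1.
have [->|ij] := eqVneq i j; rewrite ?eqxx ?(negbTE ij) /= ?mul1r ?mul0r => vi_le vi_ge0.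
  by rewrite addr_ge0 ?subr_ge0 //= addrCA gerDl subr_le0.
by rewrite addr0 vi_ge0 (le_trans vi_le).
Qed.

Lemma alpha_coef i : alpha i * a i + b i = pos i + unit_vec j i * ((1 - mass) * a j).
Proof.
rewrite -v_coef /alpha /unit_vec.
by have [->|ij] := eqVneq i j; rewrite ?eqxx ?(negbTE ij) /=; ring.
Qed.

Let y i := if 0 <= b i then 1 else a j / a i.

Lemma y_cube : cube y.
Proof.
move=> i; rewrite /y; case: ifP => _; first by rewrite ler01 lexx.
by rewrite divr_ge0 ?(ltW (a_gt0 _)) //= ler_pdivrMr // mul1r.
Qed.

Lemma y_scaled_ge i : a j <= y i * a i.
Proof. by rewrite /y; case: ifP => _; rewrite ?mul1r // divfK // gt_eqF. Qed.

Lemma y_inprod_b : \sum_i y i * b i = \sum_i pos i - a j * mass.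
Proof.
rewrite /mass mulr_sumr -sumrB; apply: eq_bigr => i _.
have ai_neq0 : a i != 0 by rewrite gt_eqF.
rewrite /y /v /pos /ind; case: ifP => _; first by ring.
by field.
Qed.

(* With weights bb attaining C*(y), the point (bb (.) y, y) of S gives the
   halfspace bound: <(bb (.) y, y), w> >= a_j + sum b^+ - a_j mass, which is
   the largest payoff of alpha since its coefficients are nonnegative. *)
Lemma forcing_small_mass : forcing alpha.
Proof.
split; first exact: alpha_simplex.
have [bb bb_simplex bb_min] := Cstar_attained hN K_gt0 y.
exists (hadamard bb y, y).
  split; first by apply: hadamard_cube _ _ _ y_cube; case: bb_simplex.
  by split; [exact: y_cube | exact: bb_min].
move=> l l_cube.
have coef_ge0 i : 0 <= alpha i * a i + b i.
  rewrite alpha_coef addr_ge0 ?pos_ge0 // /unit_vec.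
  by case: (i == j); rewrite /= ?mul0r // mul1r mulr_ge0 ?subr_ge0 ?ltW.
have payoff_le : inprod2 w (payoff alpha l) <= \sum_i pos i + (1 - mass) * a j.
  rewrite payoffE; apply: le_trans (sum_cube_le _ _ _ (fun i => lexx _) coef_ge0 l_cube) _.
  under eq_bigr do rewrite alpha_coef.
  by rewrite big_split /= -mulr_suml sum_unit_vec mul1r.
have avg_ge : a j <= \sum_i bb i * (y i * a i).
  exact: simplex_avg_ge _ _ _ bb_simplex y_scaled_ge.
apply: le_trans payoff_le _; rewrite /inprod2 /inprod /= /hadamard.
have -> : \sum_i y i * w.2 i = \sum_i y i * b i by [].
rewrite y_inprod_b.
have -> : \sum_i bb i * y i * w.1 i = \sum_i bb i * (y i * a i).
  by apply: eq_bigr => i _; rewrite mulrA.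
lra.
Qed.

End SmallMass.

Lemma forcing_positive : exists alpha, forcing alpha.
Proof.
have [mass_ge1|mass_lt1] := lerP 1 mass.
  by exists (fun i => v i / mass); exact: forcing_large_mass.
have [j _ j_min] := @arg_minP _ _ _ (Ordinal K_gt0) xpredT a isT.
by eexists; exact: (forcing_small_mass j (fun i => j_min i isT) mass_lt1).
Qed.

End PositiveCase.

Lemma forcing_exists : exists alpha, forcing alpha.
Proof.
have [[j aj_le0]|a_nonpos] := pselect (exists j, a j <= 0).
  by exists (unit_vec j); exact: forcing_nonpos.
apply: forcing_positive => i; rewrite ltNge; apply/negP => ai_le0.
by apply: a_nonpos; exists i.
Qed.

End Blackwell.

Theorem lemma1 (R : realType) (K : nat) (hK : (0 < K)%N)
  (N : vecK R K -> R) (hN : is_norm N) (w : vecK R K * vecK R K) :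
  inf [set sup [set inprod2 w (payoff a l) | l in @cube R K] | a in @simplex R K]
  <= hS N w.
Proof.
have [alpha alpha_forcing] := forcing_exists w hN hK.
exact: minmax_le_hS w alpha alpha_forcing.
Qed.
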